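(* Let $\mathscr{C}$ be a cocomplete category with pullbacks and let $\alpha$ be a partial action datum of $M$ on $X\in\mathscr{C}$. Then $\alpha$ has a universal globalization if and only if $\alpha$ has a globalization.
   Context: $M$ is a monoid with identity $e$. A partial action datum of $M$ on $X$ assigns to each $m\in M$ an isomorphism class of spans $[\operatorname{dom}\alpha_m,\iota_m,\alpha_m]$ with $\iota_m\colon\operatorname{dom}\alpha_m\to X$ a monomorphism and $\alpha_m\colon\operatorname{dom}\alpha_m\to X$ (isomorphism of spans: an isomorphism of apexes commuting with both legs); representatives are fixed. A global action of $M$ on $Y$ is a datum with $\beta(m)=[Y,\mathrm{id}_Y,\beta_m]$, $\beta_e=\mathrm{id}_Y$, $\beta_n\circ\beta_m=\beta_{nm}$. Given data $\alpha$ on $X$ and $\beta$ on $Y$ with representatives $[\operatorname{dom}\alpha_m,\iota_m,\alpha_m]$, $[\operatorname{dom}\beta_m,\kappa_m,\beta_m]$, a datum morphism $\alpha\to\beta$ is a morphism $f\colon X\to Y$ such that for each $m$ there is $f_m\colon\operatorname{dom}\alpha_m\to\operatorname{dom}\beta_m$ with $\kappa_m\circ f_m=f\circ\iota_m$ and $\beta_m\circ f_m=f\circ\alpha_m$. Given a global action $\beta$ on $Y$ and a monomorphism $\iota\colon X\to Y$, the restriction of $\beta$ to $X$ via $\iota$ is the partial action datum $\alpha$ on $X$ such that for each $m$ the square $\beta_m\circ\iota\circ\iota_m=\iota\circ\alpha_m$ is a pullback. A globalization of $\alpha$ is a pair $(\beta,\iota)$ with $\beta$ a global action on some $Y$ and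 $\iota\colon X\to Y$ a monomorphism such that $\alpha$ is the restriction of $\beta$ via $\iota$. A universal globalization is a globalization $(\beta,\iota)$ such that for every globalization $(\gamma,\kappa)$ of $\alpha$ there is a unique datum morphism $\kappa'\colon\beta\to\gamma$ with $\kappa'\circ\iota=\kappa$. *)

Set Universe Polymorphism.
Set Implicit Arguments.
Unset Strict Implicit.

Record Category@{o h} := {
  Ob :> Type@{o};
  Hom : Ob -> Ob -> Type@{h};
  comp : forall a b c : Ob, Hom b c -> Hom a b -> Hom a c;
  idm : forall a : Ob, Hom a a;
  comp_assoc : forall a b c d (f : Hom a b) (g : Hom b c) (k : Hom c d),
      comp k (comp g f) = comp (comp k g) f;
  comp_id_l : forall a b (f : Hom a b), comp (idm b) f = f;
  comp_id_r : forall a b (f : Hom a b), comp f (idm a) = f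
}.
Arguments Hom {C} a b : rename.
Arguments comp {C a b c} g f : rename.
Arguments idm {C} a : rename.

Record Functor (J C : Category) := {
  fobj :> J -> C;
  fmap : forall a b : J, Hom a b -> Hom (fobj a) (fobj b);
  fmap_id : forall a, fmap (idm a) = idm (fobj a);
  fmap_comp : forall a b c (f : Hom a b) (g : Hom b c),
      fmap (comp g f) = comp (fmap g) (fmap f)
}.
Arguments fmap {J C} f0 {a b} _.

Definition IsCocone {J C : Category} (D : Functor J C) (L : C)
  (lam : forall j : J, Hom (D j) L) : Prop :=
  forall (j j' : J) (f : Hom j j'), comp (lam j') (fmap D f) = lam j.
Arguments IsCocone {J C} D {L} lam.

Definition IsColimit {J C : Category} (D : Functor J C) (L : C)
  (lam : forall j : J, Hom (D j) L) : Prop :=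
  IsCocone D lam /\
  forall (L' : C) (mu : forall j : J, Hom (D j) L'), IsCocone D mu ->
    exists u : Hom L L', (forall j, comp u (lam j) = mu j) /\
      forall u' : Hom L L', (forall j, comp u' (lam j) = mu j) -> u' = u.
Arguments IsColimit {J C} D {L} lam.

(** [C] is cocomplete: every diagram indexed by a small category (objects and
    morphisms in the universe [h] of the hom-types of [C]) has a colimit. *)
Definition Cocomplete@{o h} (C : Category@{o h}) : Prop :=
  forall (J : Category@{h h}) (D : Functor J C),
    exists (L : C) (lam : forall j : J, Hom (D j) L), IsColimit D lam.

Definition IsPullback (C : Category) (P A B Z : C)
  (p1 : Hom P A) (p2 : Hom P B) (f : Hom A Z) (g : Hom B Z) : Prop :=
  comp f p1 = comp g p2 /\
  forall (Q : C) (q1 : Hom Q A) (q2 : Hom Q B), comp f q1 = comp g q2 ->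
    exists u : Hom Q P, (comp p1 u = q1 /\ comp p2 u = q2) /\
      forall u' : Hom Q P, comp p1 u' = q1 -> comp p2 u' = q2 -> u' = u.

Definition HasPullbacks (C : Category) : Prop :=
  forall (A B Z : C) (f : Hom A Z) (g : Hom B Z),
    exists (P : C) (p1 : Hom P A) (p2 : Hom P B), IsPullback p1 p2 f g.

Definition Mono (C : Category) (a b : C) (f : Hom a b) : Prop :=
  forall (z : C) (g k : Hom z a), comp f g = comp f k -> g = k.

Record Monoid := {
  mcarrier :> Type;
  mone : mcarrier;
  mmul : mcarrier -> mcarrier -> mcarrier;
  mmulA : forall x y z, mmul x (mmul y z) = mmul (mmul x y) z;
  mmul1l : forall x, mmul mone x = x;
  mmul1r : forall x, mmul x mone = x
}.

(** A partial action datum of [M] on [X]: for each [m], a (fixed representative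
    of an isomorphism class of) span  X <-iota_m- dom_m -alpha_m-> X,
    with [iota_m] a monomorphism. *)
Record PADatum (C : Category) (M : Monoid) (X : C) := {
  pdom : M -> C;
  piota : forall m : M, Hom (pdom m) X;
  palpha : forall m : M, Hom (pdom m) X;
  piota_mono : forall m : M, Mono (piota m)
}.

Record GlobalAction (C : Category) (M : Monoid) (Y : C) := {
  gact : M -> Hom Y Y;
  gact_one : gact (mone M) = idm Y;
  gact_mul : forall n m : M, comp (gact n) (gact m) = gact (mmul n m)
}.

Lemma idm_mono (C : Category) (Y : C) : Mono (idm Y).
Proof. intros z g k H. rewrite !comp_id_l in H. exact H. Qed.

Definition ga_datum (C : Category) (M : Monoid) (Y : C) (b : GlobalAction M Y)
  : PADatum M Y :=
  {| pdom := fun _ => Y; piota := fun _ => idm Y; palpha := gact b;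
     piota_mono := fun _ => @idm_mono C Y |}.

Definition DatumMorphism (C : Category) (M : Monoid) (X Y : C)
  (a : PADatum M X) (b : PADatum M Y) (f : Hom X Y) : Prop :=
  forall m : M, exists fm : Hom (pdom a m) (pdom b m),
    comp (piota b m) fm = comp f (piota a m) /\
    comp (palpha b m) fm = comp f (palpha a m).

Definition IsRestriction (C : Category) (M : Monoid) (X Y : C)
  (a : PADatum M X) (b : GlobalAction M Y) (i : Hom X Y) : Prop :=
  forall m : M,
    IsPullback (piota a m) (palpha a m) (comp (gact b m) i) i.

Definition IsGlobalization (C : Category) (M : Monoid) (X Y : C)
  (a : PADatum M X) (b : GlobalAction M Y) (i : Hom X Y) : Prop :=
  Mono i /\ IsRestriction a b i.

Definition HasGlobalization (C : Category) (M : Monoid) (X : C)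
  (a : PADatum M X) : Prop :=
  exists (Y : C) (b : GlobalAction M Y) (i : Hom X Y), IsGlobalization a b i.

Definition IsUniversalGlobalization (C : Category) (M : Monoid) (X Y : C)
  (a : PADatum M X) (b : GlobalAction M Y) (i : Hom X Y) : Prop :=
  IsGlobalization a b i /\
  forall (Z : C) (g : GlobalAction M Z) (k : Hom X Z), IsGlobalization a g k ->
    exists k' : Hom Y Z,
      (DatumMorphism (ga_datum b) (ga_datum g) k' /\ comp k' i = k) /\
      forall k'' : Hom Y Z,
        DatumMorphism (ga_datum b) (ga_datum g) k'' -> comp k'' i = k -> k'' = k'.

Definition HasUniversalGlobalization (C : Category) (M : Monoid) (X : C)
  (a : PADatum M X) : Prop :=
  exists (Y : C) (b : GlobalAction M Y) (i : Hom X Y),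
    IsUniversalGlobalization a b i.

(** The candidate universal globalization is
    the object [Y] "freely generated by copies [X_k] (k in M) of [X], subject to
    [inj_m o alpha_n = inj_(mn) o iota_n]":
    - Section [FreePresentation] isolates exactly what is used about [Y]: a
      family [inj : M -> Hom X Y] of compatible maps through which every other
      compatible family factors uniquely.  From such a presentation alone we
      build the shift action [beta_g o inj_k = inj_(gk)] of [M] on [Y] and the
      unit [i = inj_e], and we show that every globalization [(g, k)] receives a
      unique equivariant comparison map [phi : Y -> Z] with [phi o i = k].
      Since [(g, k)] is itself a globalization, [i] is mono and the squares
      of [beta] are pullbacks (they are reflected by [phi]), so [(beta, i)]
      is a globalization, and then a universal one.
    - Section [GlueDiagram] realises the presentation as the colimit of a
      small diagram, which exists because the category is cocomplete. *)

From Stdlib Require Import ProofIrrelevance IndefiniteDescription.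
Set Universe Polymorphism.
Set Implicit Arguments.
Unset Strict Implicit.

Lemma mono_of_comp_mono (C : Category) (a b c : C) (i : Hom a b) (f : Hom b c) :
  Mono (comp f i) -> Mono i.
Proof.
  intros Hfi z u v E. apply Hfi. rewrite <- !comp_assoc, E. reflexivity.
Qed.

Lemma pullback_reflect (C : Category) (P A B Z W : C) (p1 : Hom P A) (p2 : Hom P B)
  (f : Hom A Z) (g : Hom B Z) (phi : Hom Z W) :
  comp f p1 = comp g p2 -> IsPullback p1 p2 (comp phi f) (comp phi g) ->
  IsPullback p1 p2 f g.
Proof.
  intros Hsq [_ Hup]. split; [exact Hsq|].
  intros Q q1 q2 Hq. apply Hup. rewrite <- !comp_assoc, Hq. reflexivity.
Qed.

(** Between global actions, datum morphisms are exactly the equivariant maps: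
    the component at [m] is forced to be [f] itself. *)
Lemma datum_morphism_equivariant (C : Category) (M : Monoid) (Y Z : C)
  (b : GlobalAction M Y) (g : GlobalAction M Z) (f : Hom Y Z) :
  DatumMorphism (ga_datum b) (ga_datum g) f <->
  forall m, comp (gact g m) f = comp f (gact b m).
Proof.
  split.
  - intros Hd m. destruct (Hd m) as [fm [Hi Ha]]. simpl in Hi, Ha.
    rewrite comp_id_l, comp_id_r in Hi. subst fm. exact Ha.
  - intros Heq m. exists f. simpl. rewrite comp_id_l, comp_id_r. auto.
Qed.

Definition Compatible (C : Category) (M : Monoid) (X : C) (d : PADatum M X) (W : C)
  (f : M -> Hom X W) : Prop :=
  forall m n, comp (f m) (palpha d n) = comp (f (mmul m n)) (piota d n).

Record FreePresentation (C : Category) (M : Monoid) (X : C) (d : PADatum M X) (Y : C)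
  (inj : M -> Hom X Y) : Prop := {
  fp_compatible : Compatible d inj;
  fp_ext : forall (W : C) (u u' : Hom Y W),
      (forall k, comp u (inj k) = comp u' (inj k)) -> u = u';
  fp_lift : forall (W : C) (f : M -> Hom X W),
      Compatible d f -> exists u : Hom Y W, forall k, comp u (inj k) = f k
}.

(** Every globalization [(g, k)] yields the compatible family [g_m o k]:
    this is the commutativity of its restriction squares. *)
Lemma globalization_compatible (C : Category) (M : Monoid) (X Z : C) (d : PADatum M X)
  (g : GlobalAction M Z) (k : Hom X Z) :
  IsRestriction d g k -> Compatible d (fun m => comp (gact g m) k).
Proof.
  intros Hr m n. destruct (Hr n) as [Hsq _].
  rewrite <- comp_assoc, <- Hsq, !comp_assoc, gact_mul. reflexivity.
Qed.

Section FreePresentation.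
Variables (C : Category) (M : Monoid) (X : C) (d : PADatum M X) (Y : C).
Variables (inj : M -> Hom X Y) (P : FreePresentation d inj).

(** Left translation by [g] is compatible, so it induces an endomorphism of [Y]. *)
Lemma shift_exists (g : M) :
  exists u : Hom Y Y, forall k, comp u (inj k) = inj (mmul g k).
Proof.
  apply (fp_lift P). intros m n. rewrite mmulA. apply (fp_compatible P).
Qed.

Definition shift (g : M) : Hom Y Y :=
  proj1_sig (constructive_indefinite_description _ (shift_exists g)).

Lemma shift_inj (g k : M) : comp (shift g) (inj k) = inj (mmul g k).
Proof.
  exact (proj2_sig (constructive_indefinite_description _ (shift_exists g)) k).
Qed.

Lemma shift_one : shift (mone M) = idm Y.
Proof.
  apply (fp_ext P). intros k. rewrite shift_inj, mmul1l, comp_id_l. reflexivity.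
Qed.

Lemma shift_mul (n m : M) : comp (shift n) (shift m) = shift (mmul n m).
Proof.
  apply (fp_ext P). intros k. rewrite <- comp_assoc, !shift_inj, mmulA. reflexivity.
Qed.

Definition free_action : GlobalAction M Y :=
  {| gact := shift; gact_one := shift_one; gact_mul := shift_mul |}.

Definition free_unit : Hom X Y := inj (mone M).

Lemma inj_shift_unit (k : M) : inj k = comp (shift k) free_unit.
Proof. unfold free_unit. rewrite shift_inj, mmul1r. reflexivity. Qed.

Lemma free_square (m : M) :
  comp (comp (shift m) free_unit) (piota d m) = comp free_unit (palpha d m).
Proof.
  rewrite <- inj_shift_unit. unfold free_unit.
  rewrite (fp_compatible P (mone M) m), mmul1l. reflexivity.
Qed.

Lemma comparison_spec (Z : C) (g : GlobalAction M Z) (k : Hom X Z) (phi : Hom Y Z) :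
  (forall m, comp phi (inj m) = comp (gact g m) k) ->
  comp phi free_unit = k /\ forall m, comp (gact g m) phi = comp phi (shift m).
Proof.
  intros Hphi. split.
  - unfold free_unit. rewrite Hphi, gact_one, comp_id_l. reflexivity.
  - intros m. apply (fp_ext P). intros n.
    rewrite <- !comp_assoc, shift_inj, !Hphi, comp_assoc, gact_mul. reflexivity.
Qed.

Lemma comparison_unique (Z : C) (g : GlobalAction M Z) (k : Hom X Z) (u u' : Hom Y Z) :
  (forall m, comp (gact g m) u = comp u (shift m)) -> comp u free_unit = k ->
  (forall m, comp (gact g m) u' = comp u' (shift m)) -> comp u' free_unit = k ->
  u = u'.
Proof.
  intros Hu Huk Hu' Hu'k. apply (fp_ext P). intros m.
  rewrite inj_shift_unit, !comp_assoc, <- Hu, <- Hu', <- !comp_assoc, Huk, Hu'k.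
  reflexivity.
Qed.

Lemma comparison_exists (Z : C) (g : GlobalAction M Z) (k : Hom X Z) :
  IsRestriction d g k ->
  exists phi : Hom Y Z,
    comp phi free_unit = k /\ forall m, comp (gact g m) phi = comp phi (shift m).
Proof.
  intros Hr. destruct (fp_lift P (globalization_compatible Hr)) as [phi Hphi].
  exists phi. exact (comparison_spec Hphi).
Qed.

(** Once some globalization exists, [(free_action, free_unit)] is one: its
    monicity and its pullback squares are reflected by the comparison map. *)
Lemma free_is_globalization :
  HasGlobalization d -> IsGlobalization d free_action free_unit.
Proof.
  intros [Z [g [k [Hmono Hr]]]].
  destruct (comparison_exists Hr) as [phi [Hphik Hequiv]].
  split.
  - apply (mono_of_comp_mono (f := phi)). rewrite Hphik. exact Hmono.
  - intros m. apply (pullback_reflect (phi := phi)); [exact (free_square m)|].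
    simpl. rewrite comp_assoc, <- Hequiv, <- comp_assoc, Hphik. exact (Hr m).
Qed.

Lemma free_is_universal :
  HasGlobalization d -> IsUniversalGlobalization d free_action free_unit.
Proof.
  intros Hglob. split; [exact (free_is_globalization Hglob)|].
  intros Z g k [_ Hr].
  destruct (comparison_exists Hr) as [phi [Hphik Hequiv]].
  exists phi. split.
  - split; [apply datum_morphism_equivariant; exact Hequiv | exact Hphik].
  - intros u Hu Huk.
    exact (comparison_unique (proj1 (datum_morphism_equivariant _ _ _) Hu) Huk Hequiv Hphik).
Qed.

End FreePresentation.

(** Objects of the index category:
    - [Copy k]  : the [k]-th copy of [X];
    - [Dom m n] : the domain of [alpha_n], sent into [Copy m] by [alpha_n]
                  and into [Glue m n] by [iota_n];
    - [Glue m n], [Link k] : copies of [X] with identities [Link (mn) -> Glue m n]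
                  and [Link k -> Copy k], which identify [Glue m n] with
                  [Copy (mn)] in the colimit.
    Every non-identity arrow goes from a [Dom]/[Link] object to a
    [Copy]/[Glue] object, so the shape is a thin category without nontrivial
    composites. *)
Inductive GlueOb (M : Monoid) := Dom (m n : M) | Link (k : M) | Copy (k : M) | Glue (m n : M).
Arguments Dom {M} m n. Arguments Link {M} k. Arguments Copy {M} k. Arguments Glue {M} m n.

Definition GlueHom (M : Monoid) (a b : GlueOb M) : Prop :=
  match a, b with
  | Dom m n, Dom m' n' => m = m' /\ n = n'
  | Link k, Link k' => k = k'
  | Copy k, Copy k' => k = k'
  | Glue m n, Glue m' n' => m = m' /\ n = n'
  | Dom m n, Copy k => k = m
  | Dom m n, Glue m' n' => m = m' /\ n = n'
  | Link k, Glue m n => k = mmul m n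
  | Link k, Copy k' => k = k'
  | _, _ => False
  end.

Lemma GlueHom_comp (M : Monoid) (a b c : GlueOb M) :
  GlueHom b c -> GlueHom a b -> GlueHom a c.
Proof.
  destruct a, b, c; simpl; intros; try contradiction;
    repeat match goal with H : _ /\ _ |- _ => destruct H end; subst; auto.
Qed.

Lemma GlueHom_id (M : Monoid) (a : GlueOb M) : GlueHom a a.
Proof. destruct a; simpl; auto. Qed.

Definition GlueShape@{u h | u <= h +} (M : Monoid@{u}) : Category@{h h}.
Proof.
  refine (@Build_Category (GlueOb M) (@GlueHom M) (fun a b c => @GlueHom_comp M a b c)
            (@GlueHom_id M) _ _ _); intros; apply proof_irrelevance.
Defined.

Section GlueDiagram.
Variables (C : Category) (M : Monoid) (X : C) (d : PADatum M X).

Definition glue_ob (j : GlueOb M) : C :=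
  match j with Dom _ n => pdom d n | _ => X end.

Definition tr (n n' : M) (e : n = n') : Hom (pdom d n) (pdom d n') :=
  match e in _ = n2 return Hom (pdom d n) (pdom d n2) with eq_refl => idm _ end.

Lemma tr_refl (n : M) (e : n = n) : tr e = idm _.
Proof. rewrite (proof_irrelevance _ e eq_refl). reflexivity. Qed.

Lemma tr_comp (n1 n2 n3 : M) (e1 : n1 = n2) (e2 : n2 = n3) (e3 : n1 = n3) :
  comp (tr e2) (tr e1) = tr e3.
Proof. destruct e1, e2. rewrite !tr_refl. apply comp_id_l. Qed.

Lemma tr_natural (h : forall n, Hom (pdom d n) X) (n n' : M) (e : n = n') :
  comp (h n') (tr e) = h n.
Proof. destruct e. apply comp_id_r. Qed.

Definition glue_map (a b : GlueOb M) : GlueHom a b -> Hom (glue_ob a) (glue_ob b) :=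
  match a as a0, b as b0 return GlueHom a0 b0 -> Hom (glue_ob a0) (glue_ob b0) with
  | Dom m n, Dom m' n' => fun h => tr (proj2 h)
  | Dom m n, Copy k => fun _ => palpha d n
  | Dom m n, Glue _ _ => fun _ => piota d n
  | Link _, Link _ => fun _ => idm X
  | Copy _, Copy _ => fun _ => idm X
  | Glue _ _, Glue _ _ => fun _ => idm X
  | Link _, Glue _ _ => fun _ => idm X
  | Link _, Copy _ => fun _ => idm X
  | _, _ => fun h => match h with end
  end.

Definition glue_diagram : Functor (GlueShape M) C.
Proof.
  refine (@Build_Functor (GlueShape M) C glue_ob glue_map _ _).
  - intros a; destruct a; simpl; try reflexivity. apply tr_refl.
  -
    intros a b c f g; destruct a, b, c; simpl in *; try contradiction;
      repeat match goal with H : _ /\ _ |- _ => destruct H end; subst;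
      rewrite ?comp_id_l; try reflexivity.
    + apply eq_sym, tr_comp.
    + apply eq_sym, (tr_natural (palpha d)).
    + apply eq_sym, (tr_natural (piota d)).
Defined.

Variables (Y : C) (lam : forall j : GlueShape M, Hom (glue_diagram j) Y).
Hypothesis HL : IsColimit glue_diagram lam.

Definition copy_inj (k : M) : Hom X Y := lam (Copy k).

Lemma lam_dom_copy (m n : M) : comp (copy_inj m) (palpha d n) = lam (Dom m n).
Proof. exact (proj1 HL (Dom m n) (Copy m) (eq_refl : GlueHom (Dom m n) (Copy m))). Qed.

Lemma lam_dom_glue (m n : M) : comp (lam (Glue m n)) (piota d n) = lam (Dom m n).
Proof.
  exact (proj1 HL (Dom m n) (Glue m n) (conj eq_refl eq_refl : GlueHom (Dom m n) (Glue m n))).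
Qed.

Lemma lam_glue (m n : M) : lam (Glue m n) = copy_inj (mmul m n).
Proof.
  pose proof (proj1 HL (Link (mmul m n)) (Glue m n)
                (eq_refl : GlueHom (Link (mmul m n)) (Glue m n))) as Hglue.
  pose proof (proj1 HL (Link (mmul m n)) (Copy (mmul m n))
                (eq_refl : GlueHom (Link (mmul m n)) (Copy (mmul m n)))) as Hcopy.
  simpl in Hglue, Hcopy. rewrite comp_id_r in Hglue, Hcopy.
  unfold copy_inj. rewrite Hglue, Hcopy. reflexivity.
Qed.

Lemma lam_link (k : M) : lam (Link k) = copy_inj k.
Proof.
  pose proof (proj1 HL (Link k) (Copy k) (eq_refl : GlueHom (Link k) (Copy k))) as H.
  simpl in H. rewrite comp_id_r in H. exact (eq_sym H).
Qed.

Lemma lam_through_copy (j : GlueShape M) :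
  exists (k : M) (h : Hom (glue_diagram j) X), lam j = comp (copy_inj k) h.
Proof.
  destruct j as [m n|k|k|m n].
  - exists m, (palpha d n). exact (eq_sym (lam_dom_copy m n)).
  - exists k, (idm X). rewrite comp_id_r. exact (lam_link k).
  - exists k, (idm X). rewrite comp_id_r. reflexivity.
  - exists (mmul m n), (idm X). rewrite comp_id_r. exact (lam_glue m n).
Qed.

Lemma colimit_free_presentation : FreePresentation d copy_inj.
Proof.
  destruct HL as [Hcocone Huniv]. split.
  - intros m n. rewrite lam_dom_copy, <- lam_dom_glue, lam_glue. reflexivity.
  - intros W u u' Hu.
    destruct (Huniv W (fun j => comp u (lam j))) as [w [_ Hw]].
    { intros j j' f. rewrite <- comp_assoc, (Hcocone j j' f). reflexivity. }
    rewrite (Hw u (fun j => eq_refl)). apply eq_sym, Hw. intros j.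
    destruct (lam_through_copy j) as [k [h ->]]. rewrite !comp_assoc, Hu. reflexivity.
  - intros W f Hf.
    pose (mu := fun j : GlueShape M => match j return Hom (glue_diagram j) W with
      | Dom m n => comp (f m) (palpha d n) | Link k => f k | Copy k => f k
      | Glue m n => f (mmul m n) end).
    destruct (Huniv W mu) as [u [Hu _]].
    + intros j j' h; destruct j, j'; simpl in *; try contradiction;
        repeat match goal with H : _ /\ _ |- _ => destruct H end; subst;
        simpl; rewrite ?tr_refl, ?comp_id_r; auto.
    + exists u. intros k. exact (Hu (Copy k)).
Qed.

End GlueDiagram.

Theorem mainTheorem9 (C : Category) (Hcoc : Cocomplete C) (Hpb : HasPullbacks C)
  (M : Monoid) (X : C) (a : PADatum M X) :
  HasUniversalGlobalization a <-> HasGlobalization a.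
Proof.
  split.
  - intros [Y [b [i [Hglob _]]]]. exists Y, b, i. exact Hglob.
  - intros Hglob.
    destruct (Hcoc (GlueShape M) (glue_diagram a)) as [Y [lam HL]].
    pose proof (colimit_free_presentation HL) as P.
    exists Y, (free_action P), (free_unit (copy_inj lam)).
    exact (free_is_universal P Hglob).
Qed.
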